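(* On the square graph with vertices $0,1,2,3$ (in cyclic order) over $\mathbb{F}_2$ with exterior algebra $\Omega(\mathbb{Z}_2\times\mathbb{Z}_2)$, the unique quantum metric $g=e^1\otimes e^1+e^2\otimes e^2$ has exactly four QLCs, all flat. Two have constant coefficients: for $\alpha\in\{0,1\}$, $\nabla e^1=\nabla e^2=\alpha\,\theta\otimes\theta$ with $\sigma(e^1\otimes e^1)=\alpha e^2\otimes e^2+(1+\alpha)e^1\otimes e^1$, $\sigma(e^2\otimes e^2)=(1+\alpha)e^2\otimes e^2+\alpha e^1\otimes e^1$, $\sigma(e^1\otimes e^2)=(1+\alpha)e^2\otimes e^1+\alpha e^1\otimes e^2$, $\sigma(e^2\otimes e^1)=(1+\alpha)e^1\otimes e^2+\alpha e^2\otimes e^1$. The other two are $\nabla e^1=\theta\otimes\theta+\gamma e^1\otimes e^1$, $\nabla e^2=\theta\otimes\theta+(1+\gamma)e^2\otimes e^2$ with $\sigma(e^1\otimes e^1)=\gamma e^1\otimes e^1+e^2\otimes e^2$, $\sigma(e^1\otimes e^2)=e^1\otimes e^2$, $\sigma(e^2\otimes e^2)=e^1\otimes e^1+(1+\gamma)e^2\otimes e^2$, $\sigma(e^2\otimes e^1)=e^2\otimes e^1$, where $\gamma\in A$ is a function alternating between $0$ and $1$ around the square, i.e. $\gamma(0)=\gamma(2)$ and $\gamma(1)=\gamma(3)=1+\gamma(0)$.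
   Context: $A=\mathbb{F}_2(X)$, $X=\{0,1,2,3\}$ identified with $\mathbb{Z}_2\times\mathbb{Z}_2$ via $0=(0,0),1=(0,1),2=(1,1),3=(1,0)$; $R_1$, $R_2$ are the shifts $(R_1f)(x)=f(x+(1,0))$, $(R_2f)(x)=f(x+(0,1))$. The square graph has arrows $i\to i\pm1$ mod 4, and the calculus has basis over $A$ given by $e^1=03+30+12+21$, $e^2=01+10+32+23$ (here $ij$ denotes the arrow $i\to j$), with $e^if=(R_if)e^i$ and ${\rm d} f=\sum_i(R_if+f)e^i$; $\theta=e^1+e^2$; $\Omega^1\otimes_A\Omega^1$ is free with basis $e^i\otimes e^j$. $\Omega(\mathbb{Z}_2\times\mathbb{Z}_2)$ is the exterior algebra generated by $A$ and $e^1,e^2$ with relations $(e^1)^2=(e^2)^2=0$, $e^1\wedge e^2+e^2\wedge e^1=0$, ${\rm d} e^i=0$. A bimodule connection is a linear $\nabla:\Omega^1\to\Omega^1\otimes_A\Omega^1$ with $\nabla(f\omega)={\rm d} f\otimes\omega+f\nabla\omega$ and $\nabla(\omega f)=(\nabla\omega)f+\sigma(\omega\otimes{\rm d} f)$ for a bimodule map $\sigma$; it is a QLC if $T_\nabla=\wedge\nabla-{\rm d}=0$ and $(\nabla\otimes\mathrm{id}+(\sigma\otimes\mathrm{id})(\mathrm{id}\otimes\nabla))g=0$. Flat means $R_\nabla=({\rm d}\otimes\mathrm{id}-(\wedge\otimes\mathrm{id})(\mathrm{id}\otimes\nabla))\nabla=0$. *)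

(* Concrete coordinate model of the calculus on the square
   graph = Cayley graph of Z2 x Z2 over F_2.  Index 'i1' stands for e^1,
   'i2' for e^2. *)
From mathcomp Require Import all_boot all_algebra.
Set Implicit Arguments. Unset Strict Implicit. Unset Printing Implicit Defensive.
Import GRing.Theory.
Local Open Scope ring_scope.

Definition F := 'F_2.
Definition X := ('F_2 * 'F_2)%type.
Definition A := X -> F.

Definition i1 : 'I_2 := @Ordinal 2 0 isT.
Definition i2 : 'I_2 := @Ordinal 2 1 isT.

Definition p0 : X := (0, 0).
Definition p1 : X := (0, 1).
Definition p2 : X := (1, 1).
Definition p3 : X := (1, 0).

Definition shiftv (i : 'I_2) : X := if i == i1 then (1, 0) else (0, 1).
Definition R (i : 'I_2) (f : A) : A := fun x => f (x + shiftv i).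
Definition cst (c : F) : A := fun _ => c.

(* Omega^1 : free left A-module on e^1,e^2 ; w = sum_i (w i) e^i *)
Definition Om1 := 'I_2 -> A.
(* Omega^1 (x)_A Omega^1 : free on e^i (x) e^j *)
Definition Om2 := 'I_2 -> 'I_2 -> A.
Definition Om3 := 'I_2 -> 'I_2 -> 'I_2 -> A.
(* Omega^2 is free of rank one on e^1 /\ e^2 : we store the coefficient (type A).
   Omega^2 (x)_A Omega^1 is free on (e^1/\e^2) (x) e^k : type 'I_2 -> A. *)
Definition Om2x1 := 'I_2 -> A.

Definition add1 (w w' : Om1) : Om1 := fun i x => w i x + w' i x.
Definition lmul1 (f : A) (w : Om1) : Om1 := fun i x => f x * w i x.
(* e^i f = (R_i f) e^i *)
Definition rmul1 (w : Om1) (f : A) : Om1 := fun i x => w i x * R i f x.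
Definition add2 (T T' : Om2) : Om2 := fun i j x => T i j x + T' i j x.
Definition lmul2 (f : A) (T : Om2) : Om2 := fun i j x => f x * T i j x.
Definition rmul2 (T : Om2) (f : A) : Om2 := fun i j x => T i j x * R i (R j f) x.

Definition dA (f : A) : Om1 := fun i x => R i f x + f x.
Definition e (k : 'I_2) : Om1 := fun i _ => (i == k)%:R.

Definition tens11 (w v : Om1) : Om2 := fun i j x => w i x * R i (v j) x.
Definition tens21 (T : Om2) (w : Om1) : Om3 :=
  fun i j k x => T i j x * R i (R j (w k)) x.
Definition tens12 (w : Om1) (T : Om2) : Om3 :=
  fun i j k x => w i x * R i (T j k) x.
Definition tens_form1 (rho : A) (w : Om1) : Om2x1 :=
  fun k x => rho x * R i1 (R i2 (w k)) x.

(* wedge : Omega^1 (x) Omega^1 -> Omega^2, using e^i/\e^i = 0 and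
   e^2/\e^1 = - e^1/\e^2 *)
Definition wedge2 (T : Om2) : A := fun x => T i1 i2 x - T i2 i1 x.
Definition wedge21 (Y : Om3) : Om2x1 := fun k x => Y i1 i2 k x - Y i2 i1 k x.
(* exterior derivative on 1-forms: d(sum_i a_i e^i) = sum_i d a_i /\ e^i
   (since d e^i = 0) *)
Definition d1 (w : Om1) : A :=
  fun x => \sum_(i < 2) wedge2 (tens11 (dA (w i)) (e i)) x.

(* column decomposition: T = sum_b (col T b) (x) e^b *)
Definition col (T : Om2) (b : 'I_2) : Om1 := fun i => T i b.

Definition sigma3 (sigma : Om2 -> Om2) (Y : Om3) : Om3 :=
  fun i j k => sigma (fun a c => Y a c k) i j.

Definition is_bimod_conn (nabla : Om1 -> Om2) (sigma : Om2 -> Om2) : Prop :=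
  (forall w w', nabla (add1 w w') = add2 (nabla w) (nabla w')) /\
  (forall f w, nabla (lmul1 f w) = add2 (tens11 (dA f) w) (lmul2 f (nabla w))) /\
  (forall f w, nabla (rmul1 w f) = add2 (rmul2 (nabla w) f) (sigma (tens11 w (dA f)))) /\
  (forall T T', sigma (add2 T T') = add2 (sigma T) (sigma T')) /\
  (forall f T, sigma (lmul2 f T) = lmul2 f (sigma T)) /\
  (forall f T, sigma (rmul2 T f) = rmul2 (sigma T) f).

Definition torsion_free (nabla : Om1 -> Om2) : Prop :=
  forall w, wedge2 (nabla w) = d1 w.

(* (nabla (x) id + (sigma (x) id)(id (x) nabla)) g = 0, with
   g = sum_b (col g b) (x) e^b *)
Definition metric_compat (nabla : Om1 -> Om2) (sigma : Om2 -> Om2) (g : Om2) : Prop :=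
  forall i j k x,
    \sum_(b < 2) (tens21 (nabla (col g b)) (e b) i j k x
                  + sigma3 sigma (tens12 (col g b) (nabla (e b))) i j k x) = 0.

Definition QLC (nabla : Om1 -> Om2) (sigma : Om2 -> Om2) (g : Om2) : Prop :=
  torsion_free nabla /\ metric_compat nabla sigma g.

(* R_nabla = (d (x) id - (/\ (x) id)(id (x) nabla)) nabla, with
   nabla w = sum_b (col (nabla w) b) (x) e^b *)
Definition curvature (nabla : Om1 -> Om2) (w : Om1) : Om2x1 :=
  fun k x => \sum_(b < 2)
    (tens_form1 (d1 (col (nabla w) b)) (e b) k x
     - wedge21 (tens12 (col (nabla w) b) (nabla (e b))) k x).

Definition flat (nabla : Om1 -> Om2) : Prop :=
  forall w k x, curvature nabla w k x = 0.

Definition gmet : Om2 := fun i j _ => (i == j)%:R.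

(* left connection determined by the values N b = nabla e^b *)
Definition mk_nabla (N : 'I_2 -> Om2) : Om1 -> Om2 :=
  fun w i j x => \sum_(b < 2) (tens11 (dA (w b)) (e b) i j x + w b x * N b i j x).
(* left-linear map determined by S a b = sigma (e^a (x) e^b) *)
Definition mk_sigma (S : 'I_2 -> 'I_2 -> Om2) : Om2 -> Om2 :=
  fun T i j x => \sum_(a < 2) \sum_(b < 2) T a b x * S a b i j x.

(* basis tensors e^a (x) e^b and theta (x) theta, theta = e^1 + e^2 *)
Definition E (a b : 'I_2) : Om2 := fun i j _ => ((i == a) && (j == b))%:R.
Definition thth : Om2 := fun _ _ _ => 1.
Definition comb2 (c1 : A) (T1 : Om2) (c2 : A) (T2 : Om2) : Om2 :=
  fun i j x => c1 x * T1 i j x + c2 x * T2 i j x.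

Definition Nc (alpha : F) (b : 'I_2) : Om2 := fun i j x => alpha * thth i j x.
Definition Sc (alpha : F) (a b : 'I_2) : Om2 :=
  if a == i1 then
    (if b == i1 then comb2 (cst alpha) (E i2 i2) (cst (1 + alpha)) (E i1 i1)
     else comb2 (cst (1 + alpha)) (E i2 i1) (cst alpha) (E i1 i2))
  else
    (if b == i2 then comb2 (cst (1 + alpha)) (E i2 i2) (cst alpha) (E i1 i1)
     else comb2 (cst (1 + alpha)) (E i1 i2) (cst alpha) (E i2 i1)).

Definition Ng (gamma : A) (b : 'I_2) : Om2 :=
  if b == i1 then fun i j x => thth i j x + gamma x * E i1 i1 i j x
  else fun i j x => thth i j x + (1 + gamma x) * E i2 i2 i j x.
Definition Sg (gamma : A) (a b : 'I_2) : Om2 :=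
  if a == i1 then
    (if b == i1 then comb2 gamma (E i1 i1) (cst 1) (E i2 i2) else E i1 i2)
  else
    (if b == i2 then comb2 (cst 1) (E i1 i1) (fun x => 1 + gamma x) (E i2 i2)
     else E i2 i1).

Definition alternating (gamma : A) : Prop :=
  [/\ gamma p0 = gamma p2, gamma p1 = 1 + gamma p0 & gamma p3 = 1 + gamma p0].

From Pilot Require Import Defs.
From mathcomp Require Import all_boot all_algebra.
From Stdlib Require Import FunctionalExtensionality.
Set Implicit Arguments. Unset Strict Implicit. Unset Printing Implicit Defensive.
Import GRing.Theory.
Local Open Scope ring_scope.

(** A bimodule connection on this calculus is determined by the coefficients
    [N b i j] of [nabla e^b = sum_ij N b i j e^i (x) e^j]: left linearity gives
    [nabla = mk_nabla N], and the right Leibniz rule tested on the coordinate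
    functions of [Z2 x Z2] forces [sigma = mk_sigma (sigma_of N)].
    Torsion-freeness says [N b 1 2 = N b 2 1], leaving six functions
    [Gbij = N b i j] with [i <= j], and metric compatibility becomes eight
    quadratic equations in them.  Over F_2 the expression [a + b + a b] is
    "a or b"; read this way, the off-diagonal equations show that
    [G112 = G212] is invariant under both shifts, hence a constant [mu], and
    then [G211 = G122 = mu].  For [mu = 0] the diagonal equations kill [G111]
    and [G222]; for [mu = 1] they give [G222 = R_1 G111], [G111 = R_2 G222] and
    [G222 or R_2 G222 = 1], so [G222] is either [1] or alternates around the
    square.  Flatness and the remaining identities are finite computations. *)

(** * Polynomial identities over F_2 *)

Lemma F2P (v : F) : v = 0 \/ v = 1.
Proof. by case: v => -[|[|//]] ?; [left|right]; apply/val_inj. Qed.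

Lemma char2F : (2 : F) = 0. Proof. by apply/eqP. Qed.

Lemma F2_bit (v : F) : v = (v == 1)%:R.
Proof. by case: (F2P v) => ->. Qed.

Fixpoint bool_envs n : seq (seq bool) :=
  if n is m.+1 then [seq false :: e | e <- bool_envs m] ++ [seq true :: e | e <- bool_envs m]
  else [:: [::]].

Lemma mem_bool_envs (e : seq bool) : e \in bool_envs (size e).
Proof. by elim: e => [|[] e IHe] //=; rewrite mem_cat (map_f _ IHe) ?orbT. Qed.

Fixpoint F2_poly (t : GRing.term F) : bool :=
  match t with
  | GRing.Var _ | GRing.NatConst _ => true
  | GRing.Add t1 t2 | GRing.Mul t1 t2 => F2_poly t1 && F2_poly t2
  | GRing.Opp t1 => F2_poly t1
  | _ => false
  end.

Fixpoint F2_beval (e : seq bool) (t : GRing.term F) : bool :=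
  match t with
  | GRing.Var i => nth false e i
  | GRing.NatConst n => odd n
  | GRing.Add t1 t2 => F2_beval e t1 (+) F2_beval e t2
  | GRing.Opp t1 => F2_beval e t1
  | GRing.Mul t1 t2 => F2_beval e t1 && F2_beval e t2
  | _ => false
  end.

Lemma F2_bevalE (e : seq F) t :
  F2_poly t -> GRing.eval e t = (F2_beval [seq v == 1 | v <- e] t)%:R.
Proof.
elim: t => //= [i _|n _|t1 IH1 t2 IH2 /andP[/IH1-> /IH2->]|t1 IH1 /IH1->
               |t1 IH1 t2 IH2 /andP[/IH1-> /IH2->]].
- case: (ltnP i (size e)) => [lti|lei]; first by rewrite (nth_map 0) // -F2_bit.
  by rewrite !nth_default ?size_map.
- by rewrite -[in LHS](odd_double_half n) natrD -mul2n natrM char2F mul0r addr0.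
- by case: (F2_beval _ t1); case: (F2_beval _ t2); apply/eqP.
- by case: (F2_beval _ t1); apply/eqP.
- by case: (F2_beval _ t1); case: (F2_beval _ t2); apply/eqP.
Qed.

(** Unlike [ring], this decides identities of polynomial functions on F_2,
    where [1 + 1 = 0] and [a * a = a]: it suffices to compare them on all 0/1
    assignments of the variables. *)
Lemma F2_identity (e : seq F) (t1 t2 : GRing.term F) :
  F2_poly t1 && F2_poly t2 ->
  all (fun v => F2_beval v t1 == F2_beval v t2) (bool_envs (size e)) ->
  GRing.eval e t1 = GRing.eval e t2.
Proof.
case/andP=> p1 p2 /allP/(_ [seq v == 1 | v <- e]).
by rewrite -(size_map (eq_op^~ 1)) mem_bool_envs !F2_bevalE // => /(_ isT)/eqP->.
Qed.

Ltac F2_atoms t l :=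
  lazymatch t with
  | @Algebra.add _ ?a ?b => let l := F2_atoms a l in F2_atoms b l
  | @GRing.mul _ ?a ?b => let l := F2_atoms a l in F2_atoms b l
  | @Algebra.opp _ ?a => F2_atoms a l
  | @Algebra.zero _ => l
  | GRing.one _ => l
  | _ => F2_insert t l
  end
(* Atoms are compared up to conversion: the same coefficient may be elaborated
   with different instances of the structures on [F]. *)
with F2_insert t l :=
  lazymatch l with
  | [::] => constr:([:: t])
  | ?u :: ?l' => match tt with
                 | _ => let _ := constr:(ltac:(unify t u; exact tt) : unit) in l
                 | _ => let l' := F2_insert t l' in constr:(u :: l')
                 end
  end.

Ltac F2_index t l :=
  lazymatch l with
  | ?u :: ?l' => match tt with
                 | _ => let _ := constr:(ltac:(unify t u; exact tt) : unit) in constr:(0%N)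
                 | _ => let n := F2_index t l' in constr:(n.+1)
                 end
  end.

Ltac F2_reify t l :=
  lazymatch t with
  | @Algebra.add _ ?a ?b =>
      let x := F2_reify a l in let y := F2_reify b l in constr:(GRing.Add x y)
  | @GRing.mul _ ?a ?b =>
      let x := F2_reify a l in let y := F2_reify b l in constr:(GRing.Mul x y)
  | @Algebra.opp _ ?a => let x := F2_reify a l in constr:(GRing.Opp x)
  | @Algebra.zero _ => constr:(@GRing.NatConst F 0)
  | GRing.one _ => constr:(@GRing.NatConst F 1)
  | _ => let n := F2_index t l in constr:(@GRing.Var F n)
  end.

Ltac F2_ring :=
  lazymatch goal with |- ?a = ?b =>
    let l := F2_atoms a (@nil F) in let l := F2_atoms b l in
    let ta := F2_reify a l in let tb := F2_reify b l in
    change (GRing.eval l ta = GRing.eval l tb); apply: F2_identity; vm_compute; reflexivity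
  end.

Ltac F2_cases := repeat match goal with v : F |- _ => have [->|->] := F2P v; clear v end.

Lemma eq_via (u v t s : F) : u = v -> t + s = u + v -> t = s.
Proof.
move=> -> ts; have -> : t = t + s + s by F2_ring.
by rewrite ts; F2_ring.
Qed.

Lemma F2_orK (a b : F) : a + b + b * a = 0 -> a = 0.
Proof. by F2_cases => /eqP. Qed.

Lemma F2_neq (a b : F) : a != b -> b = 1 + a.
Proof. by F2_cases => /eqP // _; apply/eqP. Qed.

Lemma F2_or_absorb (a b c d : F) :
  a + b + b * a + b * c = 0 -> b + a + a * b + a * d = 0 -> a = b /\ a * c = a.
Proof. by F2_cases => /eqP ? /eqP ?; split; apply/eqP. Qed.

(** * The square [Z2 x Z2] *)

Lemma ord2P (i : 'I_2) : i = i1 \/ i = i2.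
Proof. by case: i => -[|[|//]] ?; [left|right]; apply/val_inj. Qed.

Lemma i1_neq_i2 : (i1 == i2) = false. Proof. by []. Qed.
Lemma i2_neq_i1 : (i2 == i1) = false. Proof. by []. Qed.
Lemma natr_true : (true%:R : F) = 1. Proof. by []. Qed.
Lemma natr_false : (false%:R : F) = 0. Proof. by []. Qed.
Definition ord2E := (eqxx, i1_neq_i2, i2_neq_i1, natr_true, natr_false).

Ltac ord2_cases i := case: (ord2P i) => ->.

Lemma sum_ord2 (G : 'I_2 -> F) : \sum_(b < 2) G b = G i1 + G i2.
Proof. by rewrite big_ord_recl big_ord1; congr (G _ + G _); apply/val_inj. Qed.

Lemma shiftvK i x : x + shiftv i + shiftv i = x.
Proof.
have ss0 : shiftv i + shiftv i = 0 by ord2_cases i; apply/eqP.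
by rewrite -addrA ss0 addr0.
Qed.

Lemma shiftvC x : x + shiftv i2 + shiftv i1 = x + shiftv i1 + shiftv i2.
Proof. exact: addrAC. Qed.

Lemma shiftv_fst x i : ((x + shiftv i).1 : F) = x.1 + (i == i1)%:R.
Proof. by ord2_cases i. Qed.

Lemma shiftv_snd x i : ((x + shiftv i).2 : F) = x.2 + (i == i2)%:R.
Proof. by ord2_cases i. Qed.

Lemma square_points :
  [/\ p1 = p0 + shiftv i2, p2 = p0 + shiftv i1 + shiftv i2 & p3 = p0 + shiftv i1].
Proof. by split; apply/eqP. Qed.

Lemma R_shiftvK i (f : A) x : R i f (x + shiftv i) = f x.
Proof. by rewrite /R shiftvK. Qed.

Lemma X_cases (y : X) : [\/ y = p0, y = p1, y = p2 | y = p3].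
Proof.
case: y => a b; case: (F2P a) => ->; case: (F2P b) => ->;
  by [apply: Or41 | apply: Or42 | apply: Or44 | apply: Or43].
Qed.

Lemma shift_invariant_cst (f : A) :
  (forall x, R i1 f x = f x) -> (forall x, R i2 f x = f x) -> forall x, f x = f p0.
Proof.
move=> f1 f2 x; have [P1 P2 P3] := square_points.
case: (X_cases x) => ->; rewrite ?P1 ?P2 ?P3 //; [exact: f2 | | exact: f1].
exact: etrans (f2 (p0 + shiftv i1)) (f1 p0).
Qed.

Ltac shift_norm := repeat first [rewrite shiftvK | rewrite shiftvC].

Ltac calc_eval :=
  unfold curvature, tens_form1, d1, wedge2, wedge21, sigma3, tens21, tens12, Defs.col,
    mk_nabla, mk_sigma, tens11, dA, e, E, add1, add2, lmul1, lmul2, rmul1, rmul2, R;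
  cbv beta iota; repeat progress (rewrite ?sum_ord2 ?ord2E; cbv beta iota); shift_norm.

Lemma Om2_ext (T T' : Om2) : (forall i j x, T i j x = T' i j x) -> T = T'.
Proof. by move=> H; do 3!(apply: functional_extensionality => ?); apply: H. Qed.

Lemma alternating_coord (g : A) : alternating g <-> forall y, g y = g p0 + y.1 + y.2.
Proof.
split=> [[g02 g10 g30] y | gE].
  by case: (X_cases y) => ->; rewrite ?g10 ?g30 -?g02 /=; F2_ring.
by rewrite /alternating (gE p1) (gE p2) (gE p3) /=; split; F2_ring.
Qed.

Lemma alternatingE (g : A) : alternating g -> forall i x, g (x + shiftv i) = 1 + g x.
Proof.
move/alternating_coord=> gE i x; rewrite (gE (x + shiftv i)) (gE x) shiftv_fst shiftv_snd.
by ord2_cases i; rewrite ?ord2E; F2_ring.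
Qed.

Definition alternating_fun (c : F) : A := fun y => c + y.1 + y.2.

Lemma alternating_fun_alt c : alternating (alternating_fun c).
Proof. by apply/alternating_coord => y; rewrite /alternating_fun /=; F2_ring. Qed.

Lemma alternating_funP g : alternating g -> g = alternating_fun (g p0).
Proof. by move/alternating_coord=> gE; apply: functional_extensionality. Qed.

(** * Bimodule connections *)

Definition sigma_of (N : 'I_2 -> Om2) (a b : 'I_2) : Om2 :=
  fun i j x => ((i == b) && (j == a))%:R + ((i == j) == (a == b))%:R * N a i j x.

Lemma mk_nabla_e N b : mk_nabla N (e b) = N b.
Proof.
by apply: Om2_ext => i j x; calc_eval; ord2_cases b; ord2_cases j; rewrite ?ord2E; F2_ring.
Qed.

Lemma mk_nabla_inj N N' : mk_nabla N = mk_nabla N' -> N = N'.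
Proof. by move=> NN'; apply: functional_extensionality => b; rewrite -!mk_nabla_e NN'. Qed.

Lemma bimod_conn_sigma_of N : is_bimod_conn (mk_nabla N) (mk_sigma (sigma_of N)).
Proof.
split; [|split; [|split; [|split; [|split]]]] => [w w'|f w|f w|T T'|f T|f T];
  apply: Om2_ext => i j x; rewrite /sigma_of; calc_eval;
  [ | ord2_cases j | ord2_cases i; ord2_cases j | | | ord2_cases i; ord2_cases j ];
  rewrite ?ord2E; cbv beta iota; shift_norm; F2_ring.
Qed.

Lemma bimod_conn_nablaE nabla sigma :
  is_bimod_conn nabla sigma -> nabla = mk_nabla (fun b => nabla (e b)).
Proof.
case=> nablaD [nablaL _]; apply: functional_extensionality => w.
have -> : w = add1 (lmul1 (w i1) (e i1)) (lmul1 (w i2) (e i2)).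
  apply: functional_extensionality => i; apply: functional_extensionality => x.
  by calc_eval; ord2_cases i; rewrite ?ord2E; F2_ring.
by rewrite nablaD !nablaL; apply: Om2_ext => i j x; calc_eval; F2_ring.
Qed.

Lemma bimod_conn_sigmaE nabla sigma :
  is_bimod_conn nabla sigma -> sigma = mk_sigma (fun a b => sigma (E a b)).
Proof.
case=> _ [_ [_ [sigmaD [sigmaL _]]]]; apply: functional_extensionality => T.
have -> : T = add2 (add2 (lmul2 (T i1 i1) (E i1 i1)) (lmul2 (T i1 i2) (E i1 i2)))
                   (add2 (lmul2 (T i2 i1) (E i2 i1)) (lmul2 (T i2 i2) (E i2 i2))).
  apply: Om2_ext => i j x.
  by calc_eval; ord2_cases i; ord2_cases j; rewrite ?ord2E; F2_ring.
by rewrite !sigmaD !sigmaL; apply: Om2_ext => i j x; calc_eval; F2_ring.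
Qed.

(** Test the right Leibniz rule on a coordinate function [f] of [Z2 x Z2]:
    [R_a R_c f - R_a f] is then the constant [(c == b)], which isolates [S a b]. *)
Lemma bimod_conn_sigma_unique N S : is_bimod_conn (mk_nabla N) (mk_sigma S) -> S = sigma_of N.
Proof.
case=> _ [_ [rLeib _]].
apply: functional_extensionality => a; apply: functional_extensionality => b.
apply: Om2_ext => i j x.
have [f fE] : exists f : A, forall y c, f (y + shiftv c) = f y + (c == b)%:R.
  by ord2_cases b; [exists (fun z => z.1) | exists (fun z => z.2)] => y c;
     rewrite ?shiftv_fst ?shiftv_snd.
have := congr1 (fun T => T i j x) (rLeib f (e a)).
calc_eval; rewrite !fE /sigma_of.
ord2_cases a; ord2_cases b; ord2_cases i; ord2_cases j; rewrite ?ord2E; cbv beta iota.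
all: by move=> H; apply: (eq_via H); F2_ring.
Qed.

Lemma bimod_connE nabla sigma : is_bimod_conn nabla sigma ->
  exists N, nabla = mk_nabla N /\ sigma = mk_sigma (sigma_of N).
Proof.
move=> bc; exists (fun b => nabla (e b)); split; first exact: bimod_conn_nablaE bc.
rewrite (bimod_conn_sigmaE bc) -(bimod_conn_sigma_unique (S := fun a b => sigma (E a b))) //.
by rewrite -(bimod_conn_sigmaE bc) -(bimod_conn_nablaE bc).
Qed.

(** * Torsion and metric compatibility *)

Definition symmetric_coef (N : 'I_2 -> Om2) := forall b x, N b i1 i2 x = N b i2 i1 x.

Lemma torsion_mk_nabla N w x :
  wedge2 (mk_nabla N w) x - d1 w x = \sum_(b < 2) w b x * (N b i1 i2 x - N b i2 i1 x).
Proof. by calc_eval; F2_ring. Qed.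

Lemma torsion_free_mk_nabla N : torsion_free (mk_nabla N) <-> symmetric_coef N.
Proof.
split=> [tf b x | sym w].
  have := torsion_mk_nabla N (e b) x; rewrite tf subrr sum_ord2 /e.
  by ord2_cases b; rewrite ?ord2E ?mul0r ?mul1r ?add0r ?addr0 => /esym/eqP;
     rewrite subr_eq0 => /eqP.
apply: functional_extensionality => x; apply/eqP; rewrite -subr_eq0 torsion_mk_nabla.
by rewrite big1 // => b _; rewrite sym subrr mulr0.
Qed.

Lemma metric_compat_mk N S : metric_compat (mk_nabla N) (mk_sigma S) gmet <->
  forall i j k x, N k i j x + \sum_(a < 2) \sum_(c < 2) R a (N a c k) x * S a c i j x = 0.
Proof.
have E i j k x : \sum_(b < 2) (tens21 (mk_nabla N (Defs.col gmet b)) (e b) i j k x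
      + sigma3 (mk_sigma S) (tens12 (Defs.col gmet b) (mk_nabla N (e b))) i j k x)
    = N k i j x + \sum_(a < 2) \sum_(c < 2) R a (N a c k) x * S a c i j x.
  rewrite (_ : Defs.col gmet = e) // !sum_ord2 !mk_nabla_e.
  by calc_eval; ord2_cases k; rewrite ?ord2E; F2_ring.
by split=> H i j k x; [rewrite -E | rewrite E].
Qed.

(** The components [(i,j,k)] of metric compatibility for symmetric [N], with
    [Gbij = N b i j], in the order (1,1,1), (1,1,2), (2,2,1), (2,2,2), then
    (1,2,1), (2,1,1), (1,2,2), (2,1,2). *)
Definition metric_system (G111 G112 G122 G211 G212 G222 : A) : Prop := forall x,
  [/\ G111 x + R i1 G111 x + R i1 G111 x * G111 x + R i2 G212 x * G211 x = 0,
      G211 x + R i1 G112 x + R i1 G112 x * G111 x + R i2 G222 x * G211 x = 0,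
      G122 x + R i2 G212 x + R i1 G111 x * G122 x + R i2 G212 x * G222 x = 0 &
      G222 x + R i2 G222 x + R i1 G112 x * G122 x + R i2 G222 x * G222 x = 0] /\
  [/\ G112 x + R i2 G211 x + R i1 G112 x * G112 x + R i2 G211 x * G212 x = 0,
      G112 x + R i1 G112 x + R i1 G112 x * G112 x + R i2 G211 x * G212 x = 0,
      G212 x + R i2 G212 x + R i1 G122 x * G112 x + R i2 G212 x * G212 x = 0 &
      G212 x + R i1 G122 x + R i1 G122 x * G112 x + R i2 G212 x * G212 x = 0].

Lemma metric_compat_system N : symmetric_coef N ->
  metric_compat (mk_nabla N) (mk_sigma (sigma_of N)) gmet <->
  metric_system (N i1 i1 i1) (N i1 i1 i2) (N i1 i2 i2) (N i2 i1 i1) (N i2 i1 i2) (N i2 i2 i2).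
Proof.
move=> sym; apply: (iff_trans (metric_compat_mk _ _)); rewrite /sigma_of.
split=> [H x | H i j k x].
  split; split;
    [ apply: (eq_via (H i1 i1 i1 x)) | apply: (eq_via (H i1 i1 i2 x))
    | apply: (eq_via (H i2 i2 i1 x)) | apply: (eq_via (H i2 i2 i2 x))
    | apply: (eq_via (H i1 i2 i1 x)) | apply: (eq_via (H i2 i1 i1 x))
    | apply: (eq_via (H i1 i2 i2 x)) | apply: (eq_via (H i2 i1 i2 x)) ];
    calc_eval; rewrite -?sym; F2_ring.
have [[E1 E2 E3 E4] [E5 E6 E7 E8]] := H x.
ord2_cases i; ord2_cases j; ord2_cases k;
  [ apply: (eq_via E1) | apply: (eq_via E2) | apply: (eq_via E5) | apply: (eq_via E7)
  | apply: (eq_via E6) | apply: (eq_via E8) | apply: (eq_via E3) | apply: (eq_via E4) ];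
  calc_eval; rewrite -?sym; F2_ring.
Qed.

Lemma QLC_mk N : QLC (mk_nabla N) (mk_sigma (sigma_of N)) gmet <->
  symmetric_coef N /\
  metric_system (N i1 i1 i1) (N i1 i1 i2) (N i1 i2 i2) (N i2 i1 i1) (N i2 i1 i2) (N i2 i2 i2).
Proof.
split=> [[/torsion_free_mk_nabla sym /(metric_compat_system sym) sys] | [sym sys]] //.
by split; [apply/torsion_free_mk_nabla | apply/(metric_compat_system sym)].
Qed.

(** * Solving the metric system *)

Section MetricSystem.

Variables G111 G112 G122 G211 G212 G222 : A.
Hypothesis sys : metric_system G111 G112 G122 G211 G212 G222.

Lemma system_shift_G211 x : R i2 G211 x = R i1 G112 x.
Proof. by have [_ [E5 E6 _ _]] := sys x; apply: (eq_via (etrans E5 (esym E6))); F2_ring. Qed.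

Lemma system_shift_G212 x : R i2 G212 x = R i1 G122 x.
Proof. by have [_ [_ _ E7 E8]] := sys x; apply: (eq_via (etrans E7 (esym E8))); F2_ring. Qed.

Lemma system_G112_absorb x : R i1 G112 x = G112 x /\ G112 x * G212 x = G112 x.
Proof.
have [_ [_ E6 _ _]] := sys x; have [_ [_ E6' _ _]] := sys (x + shiftv i1).
rewrite system_shift_G211 in E6; rewrite system_shift_G211 /R shiftvK in E6'.
by have [-> ->] := F2_or_absorb E6 E6'.
Qed.

Lemma system_G212_absorb x : R i2 G212 x = G212 x /\ G212 x * G112 x = G212 x.
Proof.
have [_ [_ _ E7 _]] := sys x; have [_ [_ _ E7' _]] := sys (x + shiftv i2).
rewrite -system_shift_G212 in E7; rewrite -system_shift_G212 /R shiftvK in E7'.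
have E : G212 x + R i2 G212 x + R i2 G212 x * G212 x + R i2 G212 x * G112 x = 0.
  by apply: (eq_via E7); F2_ring.
have E' : R i2 G212 x + G212 x + G212 x * R i2 G212 x + G212 x * R i2 G112 x = 0.
  by apply: (eq_via E7'); rewrite /R; F2_ring.
by have [-> ->] := F2_or_absorb E E'.
Qed.

Lemma system_G112_G212 x : G112 x = G212 x.
Proof.
have [_ absorb1] := system_G112_absorb x; have [_ absorb2] := system_G212_absorb x.
by rewrite -absorb1 -{2}absorb2 mulrC.
Qed.

Variable mu : F.
Hypothesis G112_p0 : G112 p0 = mu.

Lemma system_offdiag :
  [/\ forall x, G112 x = mu, forall x, G212 x = mu, forall x, G211 x = mu & forall x, G122 x = mu].
Proof.
have G112_R2 x : R i2 G112 x = G112 x.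
  by rewrite /R !system_G112_G212; exact: (proj1 (system_G212_absorb x)).
have G112_mu x : G112 x = mu.
  rewrite -G112_p0; apply: (shift_invariant_cst _ G112_R2) => y.
  by have [] := system_G112_absorb y.
have G212_mu x : G212 x = mu by rewrite -system_G112_G212.
split=> // x.
  by rewrite -(R_shiftvK i2 G211) system_shift_G211 /R G112_mu.
by rewrite -(R_shiftvK i1 G122) -system_shift_G212 /R G212_mu.
Qed.

Lemma system_diag x :
  [/\ G111 x + R i1 G111 x + R i1 G111 x * G111 x = mu,
      G222 x + R i2 G222 x + R i2 G222 x * G222 x = mu,
      mu * (R i1 G111 x + G222 x) = 0 &
      mu * (G111 x + R i2 G222 x) = 0].
Proof.
have [[E1 E2 E3 E4] _] := sys x; have [G112_mu G212_mu G211_mu G122_mu] := system_offdiag.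
split; [apply: (eq_via E1) | apply: (eq_via E4) | apply: (eq_via E3) | apply: (eq_via E2)];
  rewrite /R ?G112_mu ?G212_mu ?G211_mu ?G122_mu; F2_ring.
Qed.

Lemma system_diag_mu0 : mu = 0 -> forall x, G111 x = 0 /\ G222 x = 0.
Proof.
move=> mu0 x; have [E1 E4 _ _] := system_diag x; rewrite mu0 in E1 E4.
by split; [exact: F2_orK E1 | exact: F2_orK E4].
Qed.

Lemma system_diag_mu1 : mu = 1 ->
  (forall x, G111 x = 1 /\ G222 x = 1) \/ (alternating G222 /\ forall x, G111 x = 1 + G222 x).
Proof.
move=> mu1.
have G111E x : G111 x = R i2 G222 x.
  by have [_ _ _ E] := system_diag x; rewrite mu1 mul1r in E; apply: (eq_via E); F2_ring.
have G222E x : G222 x = R i1 G111 x.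
  by have [_ _ E _] := system_diag x; rewrite mu1 mul1r in E; apply: (eq_via E); F2_ring.
have G222_or x : G222 x + R i2 G222 x + R i2 G222 x * G222 x = 1.
  by have [_ E _ _] := system_diag x; rewrite -mu1.
have G222_diag x : G222 (x + shiftv i1 + shiftv i2) = G222 x.
  by rewrite G222E /R G111E /R; shift_norm.
have [v1 v2 v3] : [/\ G222 p1 = G222 (p0 + shiftv i2), G222 p2 = G222 p0
                    & G222 p3 = G222 (p0 + shiftv i2)].
  have [-> -> ->] := square_points; split => //.
  by rewrite -[LHS]G222_diag; shift_norm.
have [v0 | /F2_neq v0] := eqVneq (G222 p0) (G222 (p0 + shiftv i2)).
  have G222_p0 : G222 p0 = 1 by apply: (eq_via (G222_or p0)); rewrite /R -v0; F2_ring.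
  have G222_1 y : G222 y = 1 by case: (X_cases y) => ->; rewrite ?v1 ?v2 ?v3 -?v0.
  by left=> x; rewrite G111E /R !G222_1.
have alt : alternating G222 by split; rewrite ?v1 ?v2 ?v3 ?v0.
by right; split => // x; rewrite G111E /R alternatingE.
Qed.

End MetricSystem.

(** * The four connections *)

Lemma symmetric_coef_eq N N' : symmetric_coef N -> symmetric_coef N' ->
  (forall b x, [/\ N b i1 i1 x = N' b i1 i1 x, N b i1 i2 x = N' b i1 i2 x
                 & N b i2 i2 x = N' b i2 i2 x]) -> N = N'.
Proof.
move=> sN sN' NN'; apply: functional_extensionality => b; apply: Om2_ext => i j x.
by have [? ? ?] := NN' b x; ord2_cases i; ord2_cases j; rewrite -?sN -?sN'.
Qed.

Lemma symmetric_Nc a : symmetric_coef (Nc a).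
Proof. by []. Qed.

Lemma symmetric_Ng g : symmetric_coef (Ng g).
Proof. by move=> b x; rewrite /Ng /E; ord2_cases b; rewrite ?ord2E. Qed.

Lemma metric_system_solutions N : symmetric_coef N ->
  metric_system (N i1 i1 i1) (N i1 i1 i2) (N i1 i2 i2) (N i2 i1 i1) (N i2 i1 i2) (N i2 i2 i2) ->
  [\/ N = Nc 0, N = Nc 1 | exists2 g, alternating g & N = Ng g].
Proof.
move=> sym sys; have [mu0 | mu1] := F2P (N i1 i1 i2 p0).
- have [G112_0 G212_0 G211_0 G122_0] := system_offdiag sys mu0.
  apply: Or31; apply: symmetric_coef_eq sym (symmetric_Nc 0) _ => b x.
  have [G111_0 G222_0] := system_diag_mu0 sys mu0 (erefl 0) x.
  by rewrite /Nc /thth; ord2_cases b; split;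
     rewrite ?G111_0 ?G222_0 ?G112_0 ?G212_0 ?G211_0 ?G122_0; F2_ring.
have [G112_1 G212_1 G211_1 G122_1] := system_offdiag sys mu1.
have [G_1 | [alt G111E]] := system_diag_mu1 sys mu1 (erefl 1).
  apply: Or32; apply: symmetric_coef_eq sym (symmetric_Nc 1) _ => b x.
  have [G111_1 G222_1] := G_1 x.
  by rewrite /Nc /thth; ord2_cases b; split;
     rewrite ?G111_1 ?G222_1 ?G112_1 ?G212_1 ?G211_1 ?G122_1; F2_ring.
apply: Or33; exists (N i2 i2 i2) => //.
apply: symmetric_coef_eq sym (symmetric_Ng _) _ => b x.
by rewrite /Ng /thth /E; ord2_cases b; rewrite ?ord2E; split;
  rewrite ?G111E ?G112_1 ?G212_1 ?G211_1 ?G122_1; F2_ring.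
Qed.

Lemma sigma_of_Nc a : sigma_of (Nc a) = Sc a.
Proof.
apply: functional_extensionality => b; apply: functional_extensionality => c.
apply: Om2_ext => i j x.
rewrite /sigma_of /Sc /Nc /comb2 /cst /thth /E.
by ord2_cases b; ord2_cases c; ord2_cases i; ord2_cases j; rewrite ?ord2E; F2_ring.
Qed.

Lemma sigma_of_Ng g : sigma_of (Ng g) = Sg g.
Proof.
apply: functional_extensionality => b; apply: functional_extensionality => c.
apply: Om2_ext => i j x.
rewrite /sigma_of /Sg /Ng /comb2 /cst /thth /E.
by ord2_cases b; ord2_cases c; ord2_cases i; ord2_cases j; rewrite ?ord2E; F2_ring.
Qed.

Lemma system_Nc a :
  metric_system (Nc a i1 i1 i1) (Nc a i1 i1 i2) (Nc a i1 i2 i2)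
                (Nc a i2 i1 i1) (Nc a i2 i1 i2) (Nc a i2 i2 i2).
Proof. by move=> x; rewrite /Nc /thth /R; split; split; F2_ring. Qed.

Lemma system_Ng g : alternating g ->
  metric_system (Ng g i1 i1 i1) (Ng g i1 i1 i2) (Ng g i1 i2 i2)
                (Ng g i2 i1 i1) (Ng g i2 i1 i2) (Ng g i2 i2 i2).
Proof.
move=> alt x; rewrite /Ng /thth /E /R ?ord2E; cbv beta iota.
by rewrite !(alternatingE alt); split; split; F2_ring.
Qed.

Lemma flat_Nc a : flat (mk_nabla (Nc a)).
Proof. by move=> w k x; rewrite /Nc /thth; calc_eval; ord2_cases k; rewrite ?ord2E; F2_ring. Qed.

Lemma flat_Ng g : alternating g -> flat (mk_nabla (Ng g)).
Proof.
move=> alt w k x; rewrite /Ng /thth; calc_eval.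
by ord2_cases k; rewrite ?ord2E !(alternatingE alt); F2_ring.
Qed.

Lemma Nc_flat_QLC a :
  [/\ is_bimod_conn (mk_nabla (Nc a)) (mk_sigma (Sc a)),
      QLC (mk_nabla (Nc a)) (mk_sigma (Sc a)) gmet & flat (mk_nabla (Nc a))].
Proof.
rewrite -sigma_of_Nc; split; [exact: bimod_conn_sigma_of | | exact: flat_Nc].
by apply/QLC_mk; split; [exact: symmetric_Nc | exact: system_Nc].
Qed.

Lemma Ng_flat_QLC g : alternating g ->
  [/\ is_bimod_conn (mk_nabla (Ng g)) (mk_sigma (Sg g)),
      QLC (mk_nabla (Ng g)) (mk_sigma (Sg g)) gmet & flat (mk_nabla (Ng g))].
Proof.
move=> alt; rewrite -sigma_of_Ng; split; [exact: bimod_conn_sigma_of | | exact: flat_Ng].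
by apply/QLC_mk; split; [exact: symmetric_Ng | exact: system_Ng].
Qed.

Lemma Nc_inj a c : mk_nabla (Nc a) = mk_nabla (Nc c) -> a = c.
Proof. by move/mk_nabla_inj/(congr1 (fun N => N i1 i1 i1 p0)); rewrite /Nc /thth !mulr1. Qed.

Lemma Ng_inj g g' : mk_nabla (Ng g) = mk_nabla (Ng g') -> g = g'.
Proof.
move/mk_nabla_inj => NN'; apply: functional_extensionality => x.
by have := congr1 (fun N => N i1 i1 i1 x) NN'; rewrite /Ng /thth /E ?ord2E !mulr1 => /addrI.
Qed.

Lemma Nc_neq_Ng a g : alternating g -> mk_nabla (Nc a) <> mk_nabla (Ng g).
Proof.
case=> _ g10 _ /mk_nabla_inj NNg.
have coef i j y := congr1 (fun N => N i1 i j y) NNg.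
move: (coef i1 i2 p0) (coef i1 i1 p0) (coef i1 i1 p1); rewrite /Nc /Ng /thth /E ?ord2E g10.
by case: (F2P a) => ->; case: (F2P (g p0)) => -> /eqP // /eqP // /eqP.
Qed.

Lemma alternating_fun_neq : alternating_fun 0 <> alternating_fun 1.
Proof. by move/(congr1 (fun g => g p0)); rewrite /alternating_fun /= => /eqP. Qed.

Theorem proposition4p7 :
  (* the QLCs for g are exactly the listed ones *)
  (forall (nabla : Om1 -> Om2) (sigma : Om2 -> Om2),
     is_bimod_conn nabla sigma ->
     (QLC nabla sigma gmet <->
       ((exists alpha : F, nabla = mk_nabla (Nc alpha) /\ sigma = mk_sigma (Sc alpha)) \/
        (exists gamma : A, alternating gamma /\
            nabla = mk_nabla (Ng gamma) /\ sigma = mk_sigma (Sg gamma))))) /\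
  (* the listed ones are flat QLCs *)
  (forall alpha : F,
     [/\ is_bimod_conn (mk_nabla (Nc alpha)) (mk_sigma (Sc alpha)),
         QLC (mk_nabla (Nc alpha)) (mk_sigma (Sc alpha)) gmet &
         flat (mk_nabla (Nc alpha))]) /\
  (forall gamma : A, alternating gamma ->
     [/\ is_bimod_conn (mk_nabla (Ng gamma)) (mk_sigma (Sg gamma)),
         QLC (mk_nabla (Ng gamma)) (mk_sigma (Sg gamma)) gmet &
         flat (mk_nabla (Ng gamma))]) /\
  (* they are four distinct connections *)
  (forall alpha beta : F, mk_nabla (Nc alpha) = mk_nabla (Nc beta) -> alpha = beta) /\
  (forall gamma gamma' : A, alternating gamma -> alternating gamma' ->
     mk_nabla (Ng gamma) = mk_nabla (Ng gamma') -> gamma = gamma') /\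
  (forall (alpha : F) (gamma : A), alternating gamma ->
     mk_nabla (Nc alpha) <> mk_nabla (Ng gamma)) /\
  (exists gamma0 gamma1 : A, [/\ alternating gamma0, alternating gamma1, gamma0 <> gamma1 &
     forall gamma, alternating gamma -> gamma = gamma0 \/ gamma = gamma1]).
Proof.
split.
  move=> nabla sigma /bimod_connE [N [-> ->]]; split.
    case/QLC_mk => sym /(metric_system_solutions sym) [->|->|[g alt ->]].
    - by left; exists 0; rewrite sigma_of_Nc.
    - by left; exists 1; rewrite sigma_of_Nc.
    - by right; exists g; rewrite sigma_of_Ng.
  case=> [[a [-> ->]] | [g [alt [-> ->]]]]; first by case: (Nc_flat_QLC a).
  by case: (Ng_flat_QLC alt).
split; first exact: Nc_flat_QLC.
split; first by move=> g; exact: Ng_flat_QLC.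
split; first exact: Nc_inj.
split; first by move=> g g' _ _; exact: Ng_inj.
split; first exact: Nc_neq_Ng.
exists (alternating_fun 0), (alternating_fun 1).
split; [exact: alternating_fun_alt | exact: alternating_fun_alt | exact: alternating_fun_neq |].
by move=> g /alternating_funP ->; case: (F2P (g p0)) => ->; [left | right].
Qed.
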